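(* If a set $W\subseteq V$ with $|W|=3$ can be generated from some connected pair, then there exists $X\supseteq W$ such that $D[X]$ is a directed sub-block, and some $i\in W$ is reachable from all other nodes both in $D[W]$ and in $D[X]$.
   Context: $D=(V,A)$ is a directed graph. $\mathrm{IN}(X)$ is the set of nodes from which some member of $X$ is reachable by a directed path. For disjoint nonempty $X,Y,Z$, $f_E(X,Y,Z)=1$ iff $\mathrm{IN}(X)\cap\mathrm{IN}(Y)=\emptyset$ computed in $D-Z$; node $j$ is dynamically partitioning relative to $k$ and $Y$ iff $f_E(\{k\},Y,\{j\})=1$. A connected pair is a set $\{i,j\}$ joined by an arc in some direction. A set $W_n$ of size $n$ can be generated from $W_m$ of size $m$, $2\le m<n$, iff there are sets $W_m\subset\dots\subset W_n$ with $W_{l+1}=W_l\cup\{k\}$, $k\in V\setminus W_l$, such that there is an arc from $k$ to some $j\in W_l$ that is not dynamically partitioning relative to $k$ and $W_l\setminus\{j\}$. $D[W]$ is the subgraph induced on $W$; reachability in $D[W]$ is via directed paths inside $D[W]$. A graph is biconnected if it has at least three vertices, is connected and remains connected after deleting any one vertex. $D[X]$ is a directed sub-block if some node of $X$ is reachable within $D[X]$ from all other nodes and the underlying undirected graph of $D[X]$ is biconnected. *)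

(* Directed graph D = (V, A): V a finite type, A : rel V,
   with an arc from x to y iff A x y. *)
From mathcomp Require Import all_boot.
Set Implicit Arguments. Unset Strict Implicit. Unset Printing Implicit Defensive.

Section Defs.
Variables (V : finType) (A : rel V).

(* u reaches v by a directed path inside the induced subgraph D[S]
   (both endpoints in S; trivial path allowed). *)
Definition reach_in (S : {set V}) (u v : V) : bool :=
  [&& u \in S, v \in S &
      connect (fun x y => [&& A x y, x \in S & y \in S]) u v].

(* IN(X) computed in D - Z : nodes (of D - Z) from which some member of X
   is reachable by a directed path in D - Z. *)
Definition IN_minus (Z X : {set V}) : {set V} :=
  [set u | [exists x in X, reach_in (~: Z) u x]].

Definition f_E (X Y Z : {set V}) : bool :=
  IN_minus Z X :&: IN_minus Z Y == set0.

Definition dyn_partitioning (j k : V) (Y : {set V}) : bool :=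
  f_E [set k] Y [set j].

Definition gen_step (W W' : {set V}) : Prop :=
  exists k, k \notin W /\ W' = k |: W /\
    exists j, j \in W /\ A k j /\ ~~ dyn_partitioning j k (W :\ j).

Inductive gen_chain : {set V} -> {set V} -> Prop :=
| gen_chain_one W W' : gen_step W W' -> gen_chain W W'
| gen_chain_more W W' W'' : gen_chain W W' -> gen_step W' W'' -> gen_chain W W''.

Definition generated_from (Wm Wn : {set V}) : Prop :=
  2 <= #|Wm| /\ #|Wm| < #|Wn| /\ gen_chain Wm Wn.

Definition connected_pair (P : {set V}) : Prop :=
  exists i j, i != j /\ P = [set i; j] /\ (A i j || A j i).

Definition uadj (x y : V) : bool := (x != y) && (A x y || A y x).

Definition uconnected (S : {set V}) : Prop :=
  forall u v, u \in S -> v \in S ->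
    connect (fun x y => [&& uadj x y, x \in S & y \in S]) u v.

Definition biconnected (S : {set V}) : Prop :=
  3 <= #|S| /\ uconnected S /\ (forall v, v \in S -> uconnected (S :\ v)).

Definition directed_subblock (X : {set V}) : Prop :=
  (exists r, r \in X /\ forall u, u \in X -> u != r -> reach_in X u r)
  /\ biconnected X.

End Defs.

From mathcomp Require Import all_boot.
Set Implicit Arguments. Unset Strict Implicit. Unset Printing Implicit Defensive.

(* A set of size 3 generated from a connected pair {j, o} is W = {k, j, o} with an arc
   k -> j such that j does not separate k from o: some u reaches both k and o in D - j.
   Shortcutting the two paths yields branches from a common vertex w to k and to o that
   share only w and avoid j; closing them through k -> j and the arc between j and o
   gives a cycle through W, whose underlying graph is biconnected.  Every vertex of the
   cycle reaches k or o along its branch, hence j if o -> j, and o otherwise; the same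
   root works inside D[W]. *)

Section PathsAndCycles.
Variable T : finType.
Implicit Types (e : rel T) (S : {set T}) (u v x y z : T) (t c : seq T).

Definition restrict e S : rel T := fun x y => [&& e x y, x \in S & y \in S].

Lemma restrict_sym e S : symmetric e -> symmetric (restrict e S).
Proof. by move=> sym_e x y; rewrite /restrict sym_e (andbC (x \in S)). Qed.

Lemma restrict_path e S x t :
  {subset x :: t <= S} -> path (restrict e S) x t = path e x t.
Proof.
elim: t x => //= y t IH x sub_S.
have sub_S' : {subset y :: t <= S} by move=> z zt; apply: sub_S; rewrite inE zt orbT.
by rewrite IH // /restrict (sub_S x (mem_head _ _)) (sub_S' y (mem_head _ _)) !andbT.
Qed.

Lemma path_restrict_subset e S x t :
  path (restrict e S) x t -> last x t \in S -> {subset x :: t <= S}.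
Proof.
elim: t x => [|y t IH] x /=; first by move=> _ xS z /[!inE] /eqP->.
case/andP=> /and3P[_ xS _] pt tS z /[!inE] /orP[/eqP->//|zt].
exact: IH pt tS z zt.
Qed.

Lemma path_connect_last e x t y : path e x t -> y \in x :: t -> connect e y (last x t).
Proof.
move=> + yt; case/splitPl: yt => t1 t2 <-; rewrite cat_path last_cat => /andP[_ pt2].
by apply/connectP; exists t2.
Qed.

Lemma path_connect_restrict e S x t : symmetric e -> path e x t ->
  {subset x :: t <= S} -> {in x :: t &, forall y z, connect (restrict e S) y z}.
Proof.
move=> sym_e pt sub_S y z yt zt; rewrite -(restrict_path e sub_S) in pt.
apply: connect_trans (path_connect pt zt).
by rewrite (sym_connect_sym (restrict_sym S sym_e)) (path_connect pt yt).
Qed.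

Lemma rev_path_sym e : symmetric e ->
  forall y x t, path e y (rev (x :: t)) = e y (last x t) && path e x t.
Proof.
move=> sym_e y x t; rewrite (lastI x t) rev_rcons /= rev_path.
by congr (_ && _); apply: eq_path => a b; apply: sym_e.
Qed.

Lemma cycle_connect_restrict e c : symmetric e -> cycle e c ->
  {in c &, forall x y, connect (restrict e [set z in c]) x y}.
Proof.
move=> sym_e; case: c => [_ x //|x t] /=; rewrite rcons_path => /andP[pt _].
by apply: path_connect_restrict => // z zt; rewrite inE.
Qed.

Lemma cycle_delete_connect e c v : symmetric e -> uniq c -> cycle e c -> v \in c ->
  {in [set z in c] :\ v &, forall x y, connect (restrict e ([set z in c] :\ v)) x y}.
Proof.
move=> sym_e uc cc /rot_to[i p rot_c].
have mem_c z : (z \in c) = (z \in v :: p) by rewrite -rot_c mem_rot.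
have : uniq (v :: p) by rewrite -rot_c rot_uniq.
have : cycle e (v :: p) by rewrite -rot_c rot_cycle.
case: p {rot_c} mem_c => [|y t] mem_c.
  by move=> _ _ x z; rewrite in_setD1 inE mem_c inE => /andP[/negbTE->].
rewrite /= => /andP[_]; rewrite rcons_path => /andP[pt _] /andP[vt _].
have sub_S : {subset y :: t <= [set z in c] :\ v}.
  move=> z zt; rewrite in_setD1 inE mem_c (in_cons v) zt orbT andbT.
  by apply: contraNneq vt => <-.
move=> x z; rewrite !in_setD1 !inE !mem_c !(in_cons v).
move=> /andP[/negbTE-> xt] /andP[/negbTE-> zt].
exact: path_connect_restrict xt zt.
Qed.

Lemma cat_uniq_last u t1 t2 : uniq (u :: t1 ++ t2) -> uniq (last u t1 :: t2).
Proof.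
rewrite -cat_cons cat_uniq => /and3P[_ not_has ut2]; rewrite /= ut2 andbT.
by apply: contra not_has => lt2; apply/hasP; exists (last u t1) => //; apply: mem_last.
Qed.

(* Shortcutting [q2] at its first vertex on [u :: q1] keeps both paths simple and
   makes [q2] strictly shorter, until the two branches share only their source. *)
Lemma uniq_paths_common_branch e u x y q1 q2 :
  path e u q1 -> last u q1 = x -> uniq (u :: q1) ->
  path e u q2 -> last u q2 = y -> uniq (u :: q2) ->
  exists w p1 p2, [/\ path e w p1, last w p1 = x, path e w p2, last w p2 = y
                    & uniq (w :: p1 ++ p2)].
Proof.
have [n] := ubnP (size q2); elim: n u q1 q2 => // n IH u q1 q2 size_q2.
move=> pq1 lq1 uq1 pq2 lq2 uq2.
have [/hasP[z zq2 zq1] | disj] := boolP (has (mem (u :: q1)) q2); last first.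
  exists u, q1, q2; split => //.
  by rewrite -cat_cons cat_uniq uq1 disj; case/andP: uq2.
have zq2' : z \in u :: q2 by rewrite inE zq2 orbT.
move: pq1 lq1 uq1; case/splitPl: zq1 => a b la.
rewrite cat_path last_cat la => /andP[_ pb] lb /cat_uniq_last; rewrite la => ub.
move: pq2 lq2 uq2 size_q2 zq2; case/splitPl: zq2' => c d lc.
rewrite cat_path last_cat lc => /andP[_ pd] ld ucd size_cd zq2.
have ud := cat_uniq_last ucd; rewrite lc in ud.
apply: (IH z b d) => //.
case: c lc ucd size_cd zq2 => [/= <- /andP[/negP ud' _] _ /ud' // | ? c _ _ size_cd _].
rewrite ltnS in size_cd; apply: leq_trans size_cd; by rewrite /= ltnS size_cat leq_addl.
Qed.

Lemma connect_common_branch e u x y : connect e u x -> connect e u y ->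
  exists w p1 p2, [/\ path e w p1, last w p1 = x, path e w p2, last w p2 = y
                    & uniq (w :: p1 ++ p2)].
Proof.
move=> /connectP[t1 pt1 ->] /connectP[t2 pt2 ->].
case: (shortenP pt1) => q1 pq1 uq1 _; case: (shortenP pt2) => q2 pq2 uq2 _.
exact: uniq_paths_common_branch pq1 _ uq1 pq2 _ uq2.
Qed.

End PathsAndCycles.

Section DirectedGraph.
Variables (V : finType) (A : rel V).
Implicit Types (S : {set V}) (i j k o u w x y z : V).

Definition uarc : rel V := fun x y => A x y || A y x.

Lemma uarc_sym : symmetric uarc.
Proof. by move=> x y; apply: orbC. Qed.

Definition all_reach S i : Prop := forall u, u \in S -> u != i -> reach_in A S u i.

Definition subblock_extension (W : {set V}) : Prop :=
  exists X : {set V}, W \subset X /\ directed_subblock A X /\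
    exists i, i \in W /\ all_reach W i /\ all_reach X i.

Lemma reach_in_arc S x y : x \in S -> y \in S -> A x y -> reach_in A S x y.
Proof. by move=> xS yS Axy; rewrite /reach_in xS yS connect1 //= Axy xS yS. Qed.

Lemma reach_in_trans S x y z : reach_in A S x y -> reach_in A S y z -> reach_in A S x z.
Proof.
case/and3P=> xS _ cxy /and3P[_ zS cyz].
by rewrite /reach_in xS zS (connect_trans cxy cyz).
Qed.

Lemma path_reach_in_last S x t y :
  path A x t -> {subset x :: t <= S} -> y \in x :: t -> reach_in A S y (last x t).
Proof.
move=> pt sub_S yt; rewrite /reach_in (sub_S y yt) (sub_S _ (mem_last x t)) /=.
by rewrite -(restrict_path A sub_S) in pt; apply: path_connect_last pt yt.
Qed.

Lemma uconnected_uarc S :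
  {in S &, forall x y, connect (restrict uarc S) x y} -> uconnected A S.
Proof.
move=> conn x y xS yS; apply: connect_sub (conn x y xS yS) => a b /and3P[ab aS bS].
have [-> // | nab] := eqVneq a b.
by apply: connect1; apply/and3P; split=> //; rewrite /uadj nab.
Qed.

Lemma cycle_biconnected c :
  uniq c -> cycle uarc c -> 3 <= #|[set z in c]| -> biconnected A [set z in c].
Proof.
move=> uc cc c3; split=> //; split=> [|v].
  apply: uconnected_uarc => x y /[!inE] xc yc.
  exact: (cycle_connect_restrict uarc_sym cc xc yc).
by rewrite inE => vc; apply/uconnected_uarc/(cycle_delete_connect uarc_sym uc cc vc).
Qed.

Lemma connected_pair_other P j : connected_pair A P -> j \in P ->
  exists o, [/\ j != o, P = [set j; o] & uarc j o].
Proof.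
case=> a [b [nab [-> Aab]]] /set2P[->|->]; first by exists b.
by exists a; rewrite eq_sym setUC uarc_sym.
Qed.

Lemma not_dyn_partitioning_ancestor j k o : ~~ dyn_partitioning A j k [set o] ->
  exists2 u, connect (restrict A (~: [set j])) u k & connect (restrict A (~: [set j])) u o.
Proof.
case/set0Pn=> u /setIP[/[!inE] /existsP[x /andP[/set1P-> /and3P[_ _ uk]]]].
by move=> /existsP[y /andP[/set1P-> /and3P[_ _ uo]]]; exists u.
Qed.

Lemma gen_step_card W W' : gen_step A W W' -> #|W'| = #|W|.+1.
Proof. by case=> k [kW [-> _]]; rewrite cardsU1 kW. Qed.

Lemma gen_chain_card W W' : gen_chain A W W' -> #|W| < #|W'|.
Proof. by elim=> [X Y /gen_step_card-> | X Y Z _ IH /gen_step_card->] //; apply: ltnW. Qed.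

Lemma gen_chain_step W W' : gen_chain A W W' -> #|W'| = #|W|.+1 -> gen_step A W W'.
Proof.
case=> [// | X Y Z chain step]; move: (gen_chain_card chain); rewrite (gen_step_card step).
by move=> ltXY /succn_inj eqZY; rewrite eqZY ltnn in ltXY.
Qed.

Section BranchCycle.
Variables (j k o w : V) (p1 p2 : seq V).
Hypotheses (Akj : A k j) (Ajo : uarc j o) (nko : k != o)
  (p1_path : path A w p1) (p1_last : last w p1 = k)
  (p2_path : path A w p2) (p2_last : last w p2 = o)
  (branches_uniq : uniq (j :: w :: p1 ++ p2)).

Definition branch_cycle := j :: rev (w :: p1) ++ p2.
Let X := [set z in branch_cycle].
Let W := k |: [set j; o].

Lemma mem_branch_cycle z : (z \in X) = [|| z == j, z \in w :: p1 | z \in w :: p2].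
Proof.
rewrite inE in_cons mem_cat mem_rev (in_cons w p2).
by case: (z =P w) => [->|_]; rewrite ?mem_head ?orbT.
Qed.

Lemma branch_cycle_uniq : uniq branch_cycle.
Proof.
have perm : perm_eq (rev (w :: p1) ++ p2) (w :: p1 ++ p2).
  by rewrite -cat_cons perm_cat2r perm_rev.
by rewrite cons_uniq (perm_mem perm) (perm_uniq perm) -cons_uniq.
Qed.

Lemma branch_cycle_cycle : cycle uarc branch_cycle.
Proof.
have A_uarc : subrel A uarc by move=> x y Axy; rewrite /uarc Axy.
rewrite [cycle _ _]/= rcons_cat cat_path (rev_path_sym uarc_sym) p1_last.
rewrite rev_cons last_rcons rcons_path p2_last !(sub_path A_uarc) //.
by rewrite andbT (uarc_sym o) Ajo /uarc Akj orbT.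
Qed.

Lemma triangle_in_branch_cycle : [/\ k \in X, j \in X & o \in X].
Proof. by rewrite !mem_branch_cycle -p1_last -p2_last !mem_last eqxx !orbT. Qed.

Lemma branch_cycle_root : exists i, i \in W /\ all_reach W i /\ all_reach X i.
Proof.
have [kX jX oX] := triangle_in_branch_cycle.
have X_cases z : z \in X -> [\/ z = j, reach_in A X z k | reach_in A X z o].
  rewrite mem_branch_cycle => /or3P[/eqP-> | zp1 | zp2]; [exact: Or31 | apply: Or32 | apply: Or33].
    rewrite -p1_last; apply: path_reach_in_last p1_path _ zp1 => y yp1.
    by rewrite mem_branch_cycle yp1 orbT.
  rewrite -p2_last; apply: path_reach_in_last p2_path _ zp2 => y yp2.
  by rewrite mem_branch_cycle yp2 !orbT.
have [kW jW oW] : [/\ k \in W, j \in W & o \in W] by rewrite !inE !eqxx !orbT.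
have [Aoj | nAoj] := boolP (A o j).
  exists j; split=> //; split=> u.
    move=> /[!inE] /or3P[] /eqP-> nuj; try exact: reach_in_arc.
    by rewrite eqxx in nuj.
  case/X_cases=> [-> /eqP // | uk | uo] _.
    exact: reach_in_trans uk (reach_in_arc kX jX Akj).
  exact: reach_in_trans uo (reach_in_arc oX jX Aoj).
have Ajo' : A j o by move: Ajo; rewrite /uarc (negbTE nAoj) orbF.
exists o; split=> //; split=> u.
  move=> /[!inE] /or3P[] /eqP-> nuo; last by rewrite eqxx in nuo.
    exact: reach_in_trans (reach_in_arc kW jW Akj) (reach_in_arc jW oW Ajo').
  exact: reach_in_arc.
case/X_cases=> [-> | uk | uo //] _; first exact: reach_in_arc.
apply: reach_in_trans uk (reach_in_trans (reach_in_arc kX jX Akj) _).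
exact: reach_in_arc jX oX Ajo'.
Qed.

Lemma branch_cycle_subblock : subblock_extension W.
Proof.
have [i [iW [rootW rootX]]] := branch_cycle_root.
have WX : W \subset X.
  by have [kX jX oX] := triangle_in_branch_cycle; rewrite !subUset !sub1set kX jX oX.
have W3 : #|W| = 3.
  have /andP[jp _] := branches_uniq.
  have njk : j != k by apply: contraNneq jp => ->; rewrite -p1_last -cat_cons mem_cat mem_last.
  have njo : j != o.
    apply: contraNneq jp => ->; move: (mem_last w p2).
    by rewrite p2_last !inE mem_cat => /orP[] ->; rewrite ?orbT.
  by rewrite cardsU1 cards2 !inE njo eq_sym (negbTE njk) (negbTE nko).
exists X; split=> //; split; last by exists i.
split; first by exists i; split=> //; apply: (subsetP WX).
apply: cycle_biconnected branch_cycle_uniq branch_cycle_cycle _.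
by rewrite -W3 subset_leq_card.
Qed.

End BranchCycle.

Lemma triangle_extension j o k : j != o -> uarc j o -> k \notin [set j; o] -> A k j ->
  ~~ dyn_partitioning A j k [set o] -> subblock_extension (k |: [set j; o]).
Proof.
move=> njo Ajo /[!inE] /norP[nkj nko] Akj /not_dyn_partitioning_ancestor[u uk uo].
have [w [p1 [p2 [pw1 lw1 pw2 lw2 uw]]]] := connect_common_branch uk uo.
have sub1 : {subset w :: p1 <= ~: [set j]}.
  by apply: path_restrict_subset pw1 _; rewrite lw1 !inE.
have sub2 : {subset w :: p2 <= ~: [set j]}.
  by apply: path_restrict_subset pw2 _; rewrite lw2 !inE eq_sym.
rewrite restrict_path // in pw1; rewrite restrict_path // in pw2.
apply: branch_cycle_subblock Akj Ajo nko pw1 lw1 pw2 lw2 _.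
have sub : {subset w :: p1 ++ p2 <= ~: [set j]}.
  move=> y; rewrite -cat_cons mem_cat => /orP[/sub1 // | yp2].
  by apply: sub2; rewrite in_cons yp2 orbT.
by rewrite cons_uniq uw andbT; apply/negP => /sub; rewrite !inE eqxx.
Qed.

End DirectedGraph.

Theorem mainTheorem6 (V : finType) (A : rel V) (W : {set V}) :
  #|W| = 3 ->
  (exists P : {set V}, connected_pair A P /\ generated_from A P W) ->
  exists X : {set V}, W \subset X /\ directed_subblock A X /\
    exists i, i \in W /\
      (forall u, u \in W -> u != i -> reach_in A W u i) /\
      (forall u, u \in X -> u != i -> reach_in A X u i).
Proof.
move=> W3 [P [pairP [_ [_ chain]]]].
have P2 : #|P| = 2 by case: pairP => a [b [nab [-> _]]]; rewrite cards2 nab.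
have PW : #|W| = #|P|.+1 by rewrite W3 P2.
have [k [kP [-> [j [jP [Akj not_part]]]]]] := gen_chain_step chain PW.
have [o [njo defP Ajo]] := connected_pair_other pairP jP.
subst P; rewrite setU1K ?inE // in not_part.
exact: triangle_extension.
Qed.
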